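(* Let $\gamma_1,\dots,\gamma_r>0$ with $\gamma_{\min}=\min_i\gamma_i\ge\sqrt2$. Let $P$ be the solution of $A_\gamma^\top P+PA_\gamma=-I$ and $\Gamma=-A_\gamma^{-1}B=[(\gamma_1\cdots\gamma_r)^{-1},(\gamma_2\cdots\gamma_r)^{-1},\dots,\gamma_r^{-1}]^\top$. Then $\|P\Gamma\|\le\frac{C'}{\gamma_{\min}^2}$ for some constant $C'$ that does not depend on the $\gamma_i$'s.
   Context: $A_\gamma$ is the $r\times r$ matrix with diagonal entries $-\gamma_1,\dots,-\gamma_r$, entries $1$ on the superdiagonal and zeros elsewhere; $B=[0,\dots,0,1]^\top$. The indices are ordered so that $\gamma_r=\gamma_{\min}$. Norms are 2-norms. *)

From HB Require Import structures.
From mathcomp Require Import all_boot all_order all_algebra.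
Set Implicit Arguments. Unset Strict Implicit. Unset Printing Implicit Defensive.
Import Order.TTheory GRing.Theory Num.Theory.
Local Open Scope ring_scope.

Definition Agamma (R : ringType) (n : nat) (g : 'I_n -> R) : 'M[R]_n :=
  \matrix_(i, j) (if i == j then - g i
                  else if (j : nat) == i.+1 then 1 else 0).

Definition Bvec (R : ringType) (n : nat) : 'cV[R]_n.+1 :=
  \col_(i < n.+1) (if i == ord_max then 1 else 0).

Definition Gammavec (R : comUnitRingType) (n : nat) (g : 'I_n.+1 -> R) : 'cV[R]_n.+1 :=
  - (invmx (Agamma g) *m Bvec R n).

Definition norm2 (R : rcfType) (n : nat) (v : 'cV[R]_n) : R :=
  Num.sqrt (\sum_(i < n) v i 0 ^+ 2).

From HB Require Import structures.
From mathcomp Require Import all_boot all_order all_algebra.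
From mathcomp Require Import ring lra zify.
Set Implicit Arguments.
Unset Strict Implicit.
Unset Printing Implicit Defensive.
Import Order.TTheory GRing.Theory Num.Theory.
Local Open Scope ring_scope.

(* With 0-based indices, the Lyapunov equation reads entrywise
   (g_i + g_j) P_ij = [i = j] + P_(i-1,j) + P_(i,j-1), so induction on i + j gives
   g_min |P_ij| <= 2^(i+j+1) - 1; and A Gamma = -B reads
   g_i Gamma_i = [i = r-1] + Gamma_(i+1), so backward induction gives
   g_min |Gamma_i| <= 1.  Both inductions only need g_min >= 1.  Hence every entry
   of P Gamma is at most r 2^(2r-1) / g_min^2, and its 2-norm at most sqrt r times
   that. *)

Section AgammaEntries.

Variables (R : comNzRingType) (n : nat) (g : 'I_n -> R).

Lemma Agamma_mulmx m (M : 'M[R]_(n, m)) i j :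
  (Agamma g *m M) i j = - g i * M i j + \sum_(k < n | (k : nat) == i.+1) M k j.
Proof.
rewrite mxE (bigD1 i) //= mxE eqxx; congr (_ + _).
rewrite big_mkcond [RHS]big_mkcond; apply: eq_bigr => k _; rewrite mxE.
case: (eqVneq k i) => [->|_] /=; first by rewrite ltn_eqF.
by case: ifP; rewrite ?mul1r ?mul0r.
Qed.

Lemma tr_Agamma_mulmx m (M : 'M[R]_(n, m)) i j :
  ((Agamma g)^T *m M) i j = - g i * M i j + \sum_(k < n | (i : nat) == k.+1) M k j.
Proof.
rewrite mxE (bigD1 i) //= !mxE eqxx; congr (_ + _).
rewrite big_mkcond [RHS]big_mkcond; apply: eq_bigr => k _; rewrite !mxE.
case: (eqVneq k i) => [->|_] /=; first by rewrite ltn_eqF.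
by case: ifP; rewrite ?mul1r ?mul0r.
Qed.

Lemma mulmx_Agamma m (M : 'M[R]_(m, n)) i j :
  (M *m Agamma g) i j = - g j * M i j + \sum_(k < n | (j : nat) == k.+1) M i k.
Proof.
rewrite -[M *m _]trmxK trmx_mul mxE tr_Agamma_mulmx !mxE.
by congr (_ + _); apply: eq_bigr => k _; rewrite mxE.
Qed.

Lemma det_Agamma : \det (Agamma g) = \prod_i - g i.
Proof.
rewrite -det_tr det_trig; last first.
  apply/is_trig_mxP => i j ij.
  by rewrite !mxE -val_eqE /= (gtn_eqF ij) (ltn_eqF (leqW ij)).
by apply: eq_bigr => i _; rewrite !mxE eqxx.
Qed.

Lemma lyapunov_Agamma_entry (P : 'M[R]_n) :
  (Agamma g)^T *m P + P *m Agamma g = - 1%:M -> forall i j,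
  (g i + g j) * P i j =
    (i == j)%:R + \sum_(k < n | (i : nat) == k.+1) P k j
                + \sum_(k < n | (j : nat) == k.+1) P i k.
Proof.
move=> lyap i j; move: (congr1 (fun M : 'M[R]_n => M i j) lyap).
rewrite mxE tr_Agamma_mulmx mulmx_Agamma !mxE => lyap_ij.
by rewrite -[(i == j)%:R]opprK -lyap_ij; ring.
Qed.

End AgammaEntries.

Lemma Agamma_unitmx (R : fieldType) n (g : 'I_n -> R) :
  (forall i, g i != 0) -> Agamma g \in unitmx.
Proof.
move=> g_neq0; rewrite unitmxE unitfE det_Agamma.
by apply/prodf_neq0 => i _; rewrite oppr_eq0.
Qed.

Lemma Agamma_Gammavec_entry (R : fieldType) n (g : 'I_n.+1 -> R) :
  (forall i, g i != 0) -> forall i,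
  g i * Gammavec g i 0 =
    Bvec R n i 0 + \sum_(k < n.+1 | (k : nat) == i.+1) Gammavec g k 0.
Proof.
move=> g_neq0 i.
have AG : Agamma g *m Gammavec g = - Bvec R n.
  by rewrite /Gammavec mulmxN mulmxA mulmxV ?Agamma_unitmx // mul1mx.
have AG_i : - g i * Gammavec g i 0
             + \sum_(k < n.+1 | (k : nat) == i.+1) Gammavec g k 0 = - Bvec R n i 0.
  by rewrite -Agamma_mulmx AG mxE.
by rewrite -[Bvec R n i 0]opprK -AG_i; ring.
Qed.

Lemma ler_norm_sum_unique (R : numDomainType) (I : finType) (p : pred I)
    (F : I -> R) (b : R) :
  (forall k k', p k -> p k' -> k = k') -> 0 <= b ->
  (forall k, p k -> `|F k| <= b) -> `|\sum_(k | p k) F k| <= b.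
Proof.
move=> p_uniq b_ge0 F_le; case: (pickP p) => [k0 pk0|p0]; last first.
  by rewrite big_pred0 ?normr0.
rewrite (big_pred1 k0) ?F_le // => k.
by apply/idP/eqP => [pk|->]; [apply: p_uniq|].
Qed.

Lemma ler_norm_mulmx_col (R : numDomainType) m n (M : 'M[R]_(m, n))
    (v : 'cV[R]_n) (a b : R) i :
  (forall i j, `|M i j| <= a) -> (forall j, `|v j 0| <= b) ->
  `|(M *m v) i 0| <= n%:R * (a * b).
Proof.
move=> M_le v_le; rewrite mxE; apply: le_trans (ler_norm_sum _ _ _) _.
rewrite mulr_natl -[X in _ *+ X]card_ord -sumr_const.
by apply: ler_sum => j _; rewrite normrM ler_pM.
Qed.

Lemma norm2_le (R : rcfType) n (v : 'cV[R]_n) (b : R) :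
  0 <= b -> (forall i, `|v i 0| <= b) -> norm2 v <= Num.sqrt n%:R * b.
Proof.
move=> b_ge0 v_le; rewrite /norm2 -[b in _ * b]ger0_norm // -sqrtr_sqr.
rewrite -sqrtrM ?ler0n //; apply: ler_wsqrtr.
rewrite mulr_natl -[X in _ *+ X]card_ord -sumr_const.
apply: ler_sum => i _; rewrite -[v i 0 ^+ 2]real_normK ?num_real //.
by rewrite lerXn2r // nnegrE.
Qed.

Lemma lyapunov_Agamma_bound (R : realFieldType) n (g : 'I_n -> R) (c : R)
    (P : 'M[R]_n) :
  1 <= c -> (forall i, c <= g i) -> (Agamma g)^T *m P + P *m Agamma g = - 1%:M ->
  forall i j, c * `|P i j| <= 2 ^+ (i + j).+1 - 1.
Proof.
move=> c_ge1 g_ge lyap i j; have [s ij_lt] := ubnP (i + j).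
elim: s i j ij_lt => // s IH i j ij_lt.
have b_ge0 : 0 <= 2 ^+ (i + j) - 1 :> R by rewrite subr_ge0 exprn_ege1 ?ler1n.
have prev_le (k l : 'I_n) : (k + l).+1 = (i + j)%N -> `|P k l| <= 2 ^+ (i + j) - 1.
  move=> kl_ij; rewrite -kl_ij; apply: le_trans (IH k l _); last by lia.
  exact: ler_peMl.
have row_le : `|\sum_(k < n | (i : nat) == k.+1) P k j| <= 2 ^+ (i + j) - 1.
  apply: ler_norm_sum_unique => // [k k' /eqP ik /eqP ik'|k /eqP ik].
    by apply: ord_inj; lia.
  by apply: (prev_le k j); lia.
have col_le : `|\sum_(k < n | (j : nat) == k.+1) P i k| <= 2 ^+ (i + j) - 1.
  apply: ler_norm_sum_unique => // [k k' /eqP jk /eqP jk'|k /eqP jk].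
    by apply: ord_inj; lia.
  by apply: (prev_le i k); lia.
have c_le_gij : c <= g i + g j by have := g_ge i; have := g_ge j; lra.
have delta_le : `|(i == j)%:R : R| <= 1 by case: (i == j); rewrite ?normr1 ?normr0.
have entry_le : (g i + g j) * `|P i j| <= 2 ^+ (i + j).+1 - 1.
  rewrite -[g i + g j]ger0_norm -?normrM ?lyapunov_Agamma_entry //; last by lra.
  apply: le_trans (ler_normD _ _) _.
  apply: le_trans (lerD (ler_normD _ _) (lexx _)) _.
  by rewrite exprS; lra.
by apply: le_trans entry_le; rewrite ler_wpM2r.
Qed.

Lemma Gammavec_bound (R : realFieldType) n (g : 'I_n.+1 -> R) (c : R) :
  1 <= c -> (forall i, c <= g i) -> forall i, c * `|Gammavec g i 0| <= 1.
Proof.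
move=> c_ge1 g_ge i; have g_gt0 k : 0 < g k by apply: lt_le_trans (g_ge k); lra.
have [s ni_lt] := ubnP (n - i); elim: s i ni_lt => // s IH i ni_lt.
apply: le_trans (_ : g i * `|Gammavec g i 0| <= 1); first by rewrite ler_wpM2r.
rewrite -[g i]gtr0_norm // -normrM Agamma_Gammavec_entry => [|k]; last by rewrite gt_eqF.
rewrite mxE; case: (eqVneq i ord_max) => [->|_].
  by rewrite big_pred0 ?addr0 ?normr1 // => k; rewrite ltn_eqF.
rewrite add0r; apply: ler_norm_sum_unique => // [k k' /eqP ki /eqP k'i|k /eqP ki].
  by apply: ord_inj; lia.
apply: le_trans (IH k _); first exact: ler_peMl.
by have := ltn_ord k; lia.
Qed.

Theorem lemma4 (R : rcfType) (n : nat) :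
  exists C : R, forall (g : 'I_n.+1 -> R),
    (forall i, 0 < g i) ->
    (forall i, g ord_max <= g i) ->
    Num.sqrt 2 <= g ord_max ->
    forall P : 'M[R]_n.+1,
      (Agamma g)^T *m P + P *m Agamma g = - 1%:M ->
      norm2 (P *m Gammavec g) <= C / (g ord_max ^+ 2).
Proof.
pose K : R := 2 ^+ (n + n).+1.
exists (Num.sqrt n.+1%:R * (n.+1%:R * K)).
move=> g _ g_min sqrt2_le P lyap; set c := g ord_max in g_min sqrt2_le *.
have c_ge1 : 1 <= c by apply: le_trans sqrt2_le; rewrite -{1}sqrtr1 ler_wsqrtr ?ler1n.
have c_gt0 : 0 < c by lra.
have K_ge0 : 0 <= K by rewrite exprn_ge0.
have P_le i j : `|P i j| <= K / c.
  rewrite ler_pdivlMr // mulrC.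
  apply: le_trans (lyapunov_Agamma_bound c_ge1 g_min lyap i j) _.
  suff : 2 ^+ (i + j).+1 <= K by lra.
  by rewrite ler_eXn2l ?ltr1n //; have := ltn_ord i; have := ltn_ord j; lia.
have G_le j : `|Gammavec g j 0| <= c^-1.
  by rewrite -[c^-1]mul1r ler_pdivlMr // mulrC Gammavec_bound.
apply: le_trans (norm2_le _ (fun i => ler_norm_mulmx_col i P_le G_le)) _.
  by rewrite !mulr_ge0 ?ler0n ?invr_ge0 ?(ltW c_gt0).
by rewrite le_eqVlt -!mulrA -invfM -expr2 eqxx.
Qed.
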